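(* Let $(y_1,x_1),\dots,(y_\ell,x_\ell)\in\mathbb{R}^3\times\mathbb{R}^3$ and $c_1^2,\dots,c_\ell^2\ge 0$. Then strong duality holds between (SDR) and (D), i.e., the optimal values of (SDR) and (D) are equal.
   Context: For $w\in\mathbb{S}^3$ (unit sphere of $\mathbb{R}^4$), $R(w)\in SO(3)$ denotes the rotation matrix associated to the unit quaternion $w=[w_1;w_2;w_3;w_4]$ by the standard formula $R(w)=\begin{bmatrix} w_1^2+w_2^2-w_3^2-w_4^2 & 2(w_2w_3-w_1w_4) & 2(w_2w_4+w_1w_3)\\ 2(w_2w_3+w_1w_4) & w_1^2+w_3^2-w_2^2-w_4^2 & 2(w_3w_4-w_1w_2)\\ 2(w_2w_4-w_1w_3) & 2(w_3w_4+w_1w_2) & w_1^2+w_4^2-w_2^2-w_3^2\end{bmatrix}$. For each $i$, $Q_i$ is the unique symmetric $4\times4$ matrix with $w^\top Q_i w=\|y_i-R(w)x_i\|_2^2$ for all $w\in\mathbb{S}^3$. For a matrix $\mathcal{A}\in\mathbb{R}^{4(\ell+1)\times 4(\ell+1)}$ and $i,j\in\{0,\dots,\ell\}$, $[\mathcal{A}]_{ij}$ is the $4\times 4$ block with rows $4i+1,\dots,4i+4$ and columns $4j+1,\dots,4j+4$. $\mathcal{Q}$ is the symmetric $4(\ell+1)\times4(\ell+1)$ matrix with $[\mathcal{Q}]_{0i}=[\mathcal{Q}]_{i0}=\tfrac12(Q_i-c_i^2I_4)$ for $i=1,\dots,\ell$ and all other blocks zero. (SDR) is the problem: minimize $\operatorname{tr}(\mathcal{Q}\mathcal{W})+\sum_{i=1}^\ell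 c_i^2$ over symmetric positive semidefinite $\mathcal{W}\in\mathbb{R}^{4(\ell+1)\times4(\ell+1)}$ subject to $[\mathcal{W}]_{0i}=[\mathcal{W}]_{ii}$ for $i=1,\dots,\ell$ and $\operatorname{tr}([\mathcal{W}]_{00})=1$. $\mathcal{B}$ is the $4(\ell+1)\times4(\ell+1)$ matrix that is zero except $[\mathcal{B}]_{00}=I_4$. An admissible dual matrix is a symmetric $\mathcal{D}\in\mathbb{R}^{4(\ell+1)\times4(\ell+1)}$ with $[\mathcal{D}]_{ii}+2[\mathcal{D}]_{0i}=0$ for $i=1,\dots,\ell$ and all blocks other than $[\mathcal{D}]_{ii},[\mathcal{D}]_{0i},[\mathcal{D}]_{i0}$ ($i\ge1$) equal to zero. (D) is the problem: maximize $\mu+\sum_{i=1}^\ell c_i^2$ over $\mu\in\mathbb{R}$ and admissible dual matrices $\mathcal{D}$ subject to $\mathcal{Q}-\mu\mathcal{B}-\mathcal{D}\succeq 0$. *)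

From HB Require Import structures.
From mathcomp Require Import all_boot all_order all_algebra zify.
From mathcomp Require Import classical_sets reals constructive_ereal ereal.
Set Implicit Arguments.
Unset Strict Implicit.
Unset Printing Implicit Defensive.
Import Order.TTheory GRing.Theory Num.Theory.
Local Open Scope ring_scope.

Section Defs.
Variable R : realType.

(* w = [w1;w2;w3;w4] : coordinate k (k = 0..3 stands for w_{k+1}) *)
Definition wc (w : 'cV[R]_4) (k : nat) : R := w (inord k) 0.

Definition rotq (w : 'cV[R]_4) : 'M[R]_3 :=
  let w1 := wc w 0 in let w2 := wc w 1 in let w3 := wc w 2 in let w4 := wc w 3 in
  \matrix_(i < 3, j < 3)
   match nat_of_ord i, nat_of_ord j with
   | 0, 0 => w1^+2 + w2^+2 - w3^+2 - w4^+2
   | 0, 1 => 2 * (w2 * w3 - w1 * w4)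
   | 0, _ => 2 * (w2 * w4 + w1 * w3)
   | 1, 0 => 2 * (w2 * w3 + w1 * w4)
   | 1, 1 => w1^+2 + w3^+2 - w2^+2 - w4^+2
   | 1, _ => 2 * (w3 * w4 - w1 * w2)
   | _, 0 => 2 * (w2 * w4 - w1 * w3)
   | _, 1 => 2 * (w3 * w4 + w1 * w2)
   | _, _ => w1^+2 + w4^+2 - w2^+2 - w3^+2
   end.

Definition sqnorm n (v : 'cV[R]_n) : R := \sum_i (v i 0) ^+ 2.

Definition qform n (A : 'M[R]_n) (v : 'cV[R]_n) : R := (v^T *m A *m v) 0 0.

Definition psd n (A : 'M[R]_n) : Prop :=
  A^T = A /\ forall v : 'cV[R]_n, 0 <= qform A v.

End Defs.

Lemma bidx_proof n (i : 'I_n) (a : 'I_4) : (4 * i + a < 4 * n)%N.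
Proof. have := ltn_ord i; have := ltn_ord a; lia. Qed.

Definition bidx n (i : 'I_n) (a : 'I_4) : 'I_(4 * n) := Ordinal (bidx_proof i a).

Definition blk (R : Type) n (A : 'M[R]_(4 * n)) (i j : 'I_n) : 'M[R]_4 :=
  \matrix_(a < 4, b < 4) A (bidx i a) (bidx j b).

Lemma bdiv_proof n (p : 'I_(4 * n)) : (p %/ 4 < n)%N.
Proof. have := ltn_ord p; lia. Qed.
Lemma bmod_proof n (p : 'I_(4 * n)) : (p %% 4 < 4)%N.
Proof. lia. Qed.

Definition mkblk (R : Type) n (F : 'I_n -> 'I_n -> 'M[R]_4) : 'M[R]_(4 * n) :=
  \matrix_(p, q) F (Ordinal (bdiv_proof p)) (Ordinal (bdiv_proof q))
                   (Ordinal (bmod_proof p)) (Ordinal (bmod_proof q)).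

Section Problem.
Variable R : realType.
Variable l : nat.
Variables (Q : 'I_l -> 'M[R]_4) (c2 : 'I_l -> R).
(* block indices 0..l are 'I_l.+1; data index k : 'I_l corresponds to block lift ord0 k = k+1 *)

Definition Qcal : 'M[R]_(4 * l.+1) :=
  mkblk (fun i j : 'I_l.+1 =>
    match unlift ord0 i, unlift ord0 j with
    | None, Some k => 2^-1 *: (Q k - (c2 k)%:M)
    | Some k, None => 2^-1 *: (Q k - (c2 k)%:M)
    | _, _ => 0
    end).

Definition Bcal : 'M[R]_(4 * l.+1) :=
  mkblk (fun i j : 'I_l.+1 => if (i == ord0) && (j == ord0) then 1%:M else 0).

Definition SDR_feasible (W : 'M[R]_(4 * l.+1)) : Prop :=
  psd W /\
  (forall k : 'I_l, blk W ord0 (lift ord0 k) = blk W (lift ord0 k) (lift ord0 k)) /\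
  \tr (blk W ord0 ord0) = 1.

Definition SDR_obj (W : 'M[R]_(4 * l.+1)) : R := \tr (Qcal *m W) + \sum_k c2 k.

Definition admissible_dual (D : 'M[R]_(4 * l.+1)) : Prop :=
  D^T = D /\
  (forall k : 'I_l,
     blk D (lift ord0 k) (lift ord0 k) + 2%:R *: blk D ord0 (lift ord0 k) = 0) /\
  (forall i j : 'I_l.+1,
     ~ ((i == j) && (i != ord0) || (i == ord0) && (j != ord0) || (j == ord0) && (i != ord0)) ->
     blk D i j = 0).

Definition D_feasible (mu : R) (D : 'M[R]_(4 * l.+1)) : Prop :=
  admissible_dual D /\ psd (Qcal - mu *: Bcal - D).

Definition D_obj (mu : R) : R := mu + \sum_k c2 k.

Definition SDR_value : \bar R :=
  ereal_inf [set (SDR_obj W)%:E | W in SDR_feasible].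

Definition D_value : \bar R :=
  ereal_sup [set (D_obj mu)%:E | mu in [set mu | exists D, D_feasible mu D]].

End Problem.

From HB Require Import structures.
From mathcomp Require Import all_boot all_order all_algebra.
From mathcomp Require Import classical_sets reals constructive_ereal ereal.
From mathcomp Require Import zify ring lra.
From mathcomp Require Import boolp topology normedtype derive.
Import Order.TTheory GRing.Theory Num.Theory.
Import numFieldTopology.Exports numFieldNormedType.Exports.
Local Open Scope ring_scope.
Set Implicit Arguments.
Unset Strict Implicit.
Unset Printing Implicit Defensive.

(* Weak duality is the nonnegativity of <Qcal - mu Bcal - D, W> for PSD
   matrices, the dual term vanishing on SDR-feasible W.  For the converse take
   mu below the SDR value mu'.  Every PSD W with the symmetrized constraints
   2 W_kk = W_0k + W_k0 satisfies mu' tr W_00 <= <Qcal, W>: after perturbing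
   W_00 to be invertible, a Schur-complement completion turns W into an
   SDR-feasible matrix with the same objective.  Hence Qcal - mu Bcal is
   positive on the trace-one PSD matrices orthogonal to all admissible duals,
   and a theorem of alternatives on the compact spectraplex (a minimum-norm
   point argument) yields an admissible D with Qcal - mu Bcal - D PSD. *)

Section FrobeniusProduct.
Variables (R : comNzRingType) (m : nat).
Implicit Types A B C : 'M[R]_m.

Definition mxdot A B := \tr (A *m B^T).

Lemma mxdotC A B : mxdot A B = mxdot B A.
Proof. by rewrite /mxdot -mxtrace_tr trmx_mul trmxK. Qed.

Lemma mxdot_tr A B : mxdot A^T B^T = mxdot A B.
Proof. by rewrite /mxdot -trmx_mul mxtrace_tr mxtrace_mulC. Qed.

Lemma mxdotDl A B C : mxdot (A + B) C = mxdot A C + mxdot B C.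
Proof. by rewrite /mxdot mulmxDl mxtraceD. Qed.

Lemma mxdotZl a A C : mxdot (a *: A) C = a * mxdot A C.
Proof. by rewrite /mxdot -scalemxAl mxtraceZ. Qed.

Lemma mxdotNl A C : mxdot (- A) C = - mxdot A C.
Proof. by rewrite -scaleN1r mxdotZl mulN1r. Qed.

Lemma mxdotBl A B C : mxdot (A - B) C = mxdot A C - mxdot B C.
Proof. by rewrite mxdotDl mxdotNl. Qed.

Lemma mxdot0l C : mxdot 0 C = 0.
Proof. by rewrite /mxdot mul0mx mxtrace0. Qed.

Lemma mxdot_suml I (r : seq I) (P : pred I) (F : I -> 'M[R]_m) C :
  mxdot (\sum_(i <- r | P i) F i) C = \sum_(i <- r | P i) mxdot (F i) C.
Proof. by elim/big_rec2: _ => [|i x y _ <-]; rewrite ?mxdot0l ?mxdotDl. Qed.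

Lemma mxdotDr A B C : mxdot C (A + B) = mxdot C A + mxdot C B.
Proof. by rewrite !(mxdotC C) mxdotDl. Qed.

Lemma mxdotZr a A C : mxdot C (a *: A) = a * mxdot C A.
Proof. by rewrite !(mxdotC C) mxdotZl. Qed.

Lemma mxdotBr A B C : mxdot C (A - B) = mxdot C A - mxdot C B.
Proof. by rewrite !(mxdotC C) mxdotBl. Qed.

Lemma mxdot0r C : mxdot C 0 = 0.
Proof. by rewrite mxdotC mxdot0l. Qed.

Lemma mxdotE A B : mxdot A B = \sum_p \sum_q A p q * B p q.
Proof.
by apply: eq_bigr => p _; rewrite mxE; apply: eq_bigr => q _; rewrite mxE.
Qed.

Lemma mxdot1l B : mxdot 1%:M B = \tr B.
Proof. by rewrite /mxdot mul1mx mxtrace_tr. Qed.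

Lemma mxdot_deltal p q B : mxdot (delta_mx p q) B = B p q.
Proof.
rewrite mxdotE (bigD1 p) //= (bigD1 q) //= mxE !eqxx mul1r.
rewrite !big1 ?addr0 // => [i /negbTE ip | j /negbTE jq].
  by apply: big1 => j _; rewrite mxE ip mul0r.
by rewrite mxE jq andbF mul0r.
Qed.

Lemma mxtrace_delta p : \tr (delta_mx p p : 'M[R]_m) = 1.
Proof. by rewrite -mxdot1l mxdotC mxdot_deltal mxE eqxx. Qed.

End FrobeniusProduct.

Section QuadraticForms.
Variable R : realType.

Definition bform m (u : 'cV[R]_m) (A : 'M[R]_m) (w : 'cV[R]_m) := (u^T *m A *m w) 0 0.

Lemma qformE m (A : 'M[R]_m) v : qform A v = bform v A v.
Proof. by []. Qed.

Lemma bformDl m (u1 u2 w : 'cV[R]_m) A :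
  bform (u1 + u2) A w = bform u1 A w + bform u2 A w.
Proof. by rewrite /bform linearD /= !mulmxDl mxE. Qed.

Lemma bformDr m (u w1 w2 : 'cV[R]_m) A :
  bform u A (w1 + w2) = bform u A w1 + bform u A w2.
Proof. by rewrite /bform mulmxDr mxE. Qed.

Lemma bformZl m a (u w : 'cV[R]_m) A : bform (a *: u) A w = a * bform u A w.
Proof. by rewrite /bform linearZ /= -!scalemxAl mxE. Qed.

Lemma bformZr m a (u w : 'cV[R]_m) A : bform u A (a *: w) = a * bform u A w.
Proof. by rewrite /bform -scalemxAr mxE. Qed.

Lemma bformDm m (u w : 'cV[R]_m) A B : bform u (A + B) w = bform u A w + bform u B w.
Proof. by rewrite /bform mulmxDr mulmxDl mxE. Qed.

Lemma bformZm m a (u w : 'cV[R]_m) A : bform u (a *: A) w = a * bform u A w.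
Proof. by rewrite /bform -scalemxAr -scalemxAl mxE. Qed.

Lemma bformBm m (u w : 'cV[R]_m) A B : bform u (A - B) w = bform u A w - bform u B w.
Proof. by rewrite -scaleN1r bformDm bformZm mulN1r. Qed.

Lemma bform_trm m (u w : 'cV[R]_m) A : bform u A^T w = bform w A u.
Proof.
have E : (w^T *m A *m u)^T = u^T *m A^T *m w by rewrite !trmx_mul trmxK mulmxA.
by rewrite /bform -E mxE.
Qed.

Lemma bform_sym m (u w : 'cV[R]_m) A : A^T = A -> bform u A w = bform w A u.
Proof. by move=> sA; rewrite -bform_trm sA. Qed.

Lemma bform_mulmx m k (M1 M2 : 'M[R]_(k, m)) u A w :
  bform (M1 *m u) A (M2 *m w) = bform u (M1^T *m A *m M2) w.
Proof. by rewrite /bform trmx_mul !mulmxA. Qed.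

Lemma bform_delta m (A : 'M[R]_m) p q : bform (delta_mx p 0) A (delta_mx q 0) = A p q.
Proof. by rewrite /bform trmx_delta -rowE -colE !mxE. Qed.

Lemma qform_mulmx m k (M : 'M[R]_(k, m)) v A : qform (M^T *m A *m M) v = qform A (M *m v).
Proof. by rewrite !qformE bform_mulmx. Qed.

Lemma qformDm m (A B : 'M[R]_m) v : qform (A + B) v = qform A v + qform B v.
Proof. exact: bformDm. Qed.

Lemma qformZm m a (A : 'M[R]_m) v : qform (a *: A) v = a * qform A v.
Proof. exact: bformZm. Qed.

Lemma qformBm m (A B : 'M[R]_m) v : qform (A - B) v = qform A v - qform B v.
Proof. exact: bformBm. Qed.

Lemma qform0 m (A : 'M[R]_m) : qform A 0 = 0.
Proof. by rewrite qformE /bform mulmx0 mxE. Qed.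

Lemma qformDZ m (A : 'M[R]_m) u w t : A^T = A ->
  qform A (u + t *: w) = qform A u + 2 * t * bform u A w + t ^+ 2 * qform A w.
Proof.
move=> sA; rewrite !qformE bformDl !bformDr !bformZl !bformZr (bform_sym w _ sA).
by ring.
Qed.

Lemma qform_mxdot m (A : 'M[R]_m) v : qform A v = mxdot A (v *m v^T).
Proof.
by rewrite /mxdot /qform trmx_mul trmxK mulmxA mxtrace_mulC mulmxA /mxtrace big_ord1.
Qed.

Lemma qform_rank1 m (u v : 'cV[R]_m) : qform (u *m u^T) v = ((u^T *m v) 0 0) ^+ 2.
Proof.
have E : (v^T *m u)^T = u^T *m v by rewrite trmx_mul trmxK.
rewrite /qform !mulmxA -mulmxA -E [LHS]mxE big_ord1 expr2.
by rewrite [_^T 0 0]mxE.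
Qed.

Lemma qform1 m (v : 'cV[R]_m) : qform 1%:M v = sqnorm v.
Proof.
rewrite /qform mulmx1 mxE /sqnorm; apply: eq_bigr => i _.
by rewrite mxE expr2.
Qed.

Lemma sqnorm_ge0 m (v : 'cV[R]_m) : 0 <= sqnorm v.
Proof. by apply: sumr_ge0 => i _; exact: sqr_ge0. Qed.

Lemma sqnorm_gt0 m (v : 'cV[R]_m) : v != 0 -> 0 < sqnorm v.
Proof.
move=> nz; have [i vi] : exists i, v i 0 != 0.
  apply/existsP; apply: contraR nz => /existsPn v0.
  by apply/eqP/matrixP => i j; rewrite (ord1 j) mxE; apply/eqP/negPn.
rewrite /sqnorm (bigD1 i) //= ltr_pwDl ?sqnorm_ge0 //.
  by rewrite lt_def sqrf_eq0 vi sqr_ge0.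
by apply: sumr_ge0 => j _; exact: sqr_ge0.
Qed.

End QuadraticForms.

Section Semidefinite.
Variable R : realType.

Lemma psd_diag_ge0 m (W : 'M[R]_m) p : psd W -> 0 <= W p p.
Proof. by move=> [_ qW]; have := qW (delta_mx p 0); rewrite qformE bform_delta. Qed.

Lemma psd_col_eq0 m (W : 'M[R]_m) p q : psd W -> W p p = 0 -> W q p = 0.
Proof.
move=> [sW qW] Wpp; apply/eqP; apply: contraT => nz.
pose t := - (W q q + 1) / (2 * W q p).
have := qW (delta_mx q 0 + t *: delta_mx p 0).
rewrite qformDZ // !qformE !bform_delta Wpp mulr0 addr0.
have -> : 2 * t * W q p = - (W q q + 1) by rewrite /t; field.
lra.
Qed.

Lemma psdD m (A B : 'M[R]_m) : psd A -> psd B -> psd (A + B).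
Proof.
move=> [sA qA] [sB qB]; split; first by rewrite linearD /= sA sB.
by move=> v; rewrite qformDm addr_ge0.
Qed.

Lemma psd0 m : psd (0 : 'M[R]_m).
Proof. by split=> [|v]; [rewrite trmx0 | rewrite /qform mulmx0 mul0mx mxE]. Qed.

Lemma psd_sum m I (r : seq I) (P : pred I) (F : I -> 'M[R]_m) :
  (forall i, P i -> psd (F i)) -> psd (\sum_(i <- r | P i) F i).
Proof.
by move=> pF; elim/big_rec: _ => [|i A Pi pA]; [exact: psd0 | exact: psdD (pF i Pi) pA].
Qed.

Lemma psdZ m a (A : 'M[R]_m) : 0 <= a -> psd A -> psd (a *: A).
Proof.
move=> a0 [sA qA]; split; first by rewrite linearZ /= sA.
by move=> v; rewrite qformZm mulr_ge0.
Qed.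

Lemma psd_mulmx m k (M : 'M[R]_(k, m)) A : psd A -> psd (M^T *m A *m M).
Proof.
move=> [sA qA]; split; first by rewrite !trmx_mul trmxK sA mulmxA.
by move=> v; rewrite qform_mulmx.
Qed.

Lemma psd_rank1 m (v : 'cV[R]_m) : psd (v *m v^T).
Proof.
by split=> [|u]; rewrite ?trmx_mul ?trmxK // qform_rank1 sqr_ge0.
Qed.

Lemma posdef_unitmx m (A : 'M[R]_m) :
  (forall v, v != 0 -> 0 < qform A v) -> A \in unitmx.
Proof.
move=> Apos; rewrite -row_free_unit -kermx_eq0.
apply/eqP/row_matrixP => i; rewrite row0; apply/eqP; apply: contraT => nz.
have := Apos (row i (kermx A))^T; rewrite trmx_eq0 => /(_ nz).
by rewrite qformE /bform trmxK -row_mul mulmx_ker row0 mul0mx mxE ltxx.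
Qed.

Lemma psd_invmx m (X : 'M[R]_m) : psd X -> X \in unitmx -> psd (invmx X).
Proof.
move=> [sX qX] uX; have sY : (invmx X)^T = invmx X by rewrite trmx_inv sX.
split=> // u.
have -> : invmx X = (invmx X)^T *m X *m invmx X by rewrite sY -mulmxA mulmxV // mulmx1.
by rewrite qform_mulmx.
Qed.

Definition schur_step m (W : 'M[R]_m) p :=
  W - (W p p)^-1 *: (col p W *m (col p W)^T).

Lemma schur_stepE m (W : 'M[R]_m) p q r :
  schur_step W p q r = W q r - (W p p)^-1 * (W q p * W r p).
Proof. by rewrite !mxE big_ord1 !mxE. Qed.

Lemma schur_step_col m (W : 'M[R]_m) p q : psd W -> schur_step W p q p = 0.
Proof.
move=> pW; rewrite schur_stepE.
have [w0|wn0] := eqVneq (W p p) 0; last by field.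
by rewrite (psd_col_eq0 q pW w0) mul0r mulr0 subr0.
Qed.

Lemma psd_schur_step m (W : 'M[R]_m) p : psd W -> psd (schur_step W p).
Proof.
move=> pW; have [sW qW] := pW; set w := W p p.
have [w0|wn0] := eqVneq w 0; first by rewrite /schur_step -/w w0 invr0 scale0r subr0.
split; first by rewrite /schur_step linearB /= linearZ /= trmx_mul trmxK sW.
move=> v; set b := bform v W (delta_mx p 0).
have -> : qform (schur_step W p) v = qform W v - w^-1 * b ^+ 2.
  by rewrite qformBm qformZm qform_rank1 colE trmx_mul sW /b (bform_sym _ _ sW).
have := qW (v + (- (b / w)) *: delta_mx p 0).
rewrite qformDZ // [qform W (delta_mx p 0)]qformE bform_delta -/w -/b -addrA.
have -> // : 2 * - (b / w) * b + (- (b / w)) ^+ 2 * w = - (w^-1 * b ^+ 2).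
by field.
Qed.

(* Symmetric Gaussian elimination: schur_step W p stays PSD and kills column p,
   while the rank-one term it removes contributes qform P (col p W) >= 0. *)
Lemma mxdot_psd_ge0 m (P W : 'M[R]_m) : psd P -> psd W -> 0 <= mxdot P W.
Proof.
move=> pP; suff col_supp : forall (s : seq 'I_m) W, psd W ->
    (forall q r, r \notin s -> W q r = 0) -> 0 <= mxdot P W.
  by move=> pW; apply: (col_supp (enum 'I_m)) => // q r; rewrite mem_enum.
elim=> [|p s IH] {}W pW Wsupp.
  have -> : W = 0 by apply/matrixP => q r; rewrite mxE Wsupp.
  by rewrite mxdot0r.
have -> : W = schur_step W p + (W p p)^-1 *: (col p W *m (col p W)^T).
  by rewrite subrK.
rewrite mxdotDr mxdotZr -qform_mxdot; apply: addr_ge0.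
  apply: IH; first exact: psd_schur_step.
  move=> q r rs; have [->|rp] := eqVneq r p; first exact: schur_step_col.
  have Wr q' : W q' r = 0 by apply: Wsupp; rewrite in_cons negb_or rp.
  rewrite schur_stepE [W r p](_ : _ = W p r) ?Wr ?mulr0 ?subr0 //.
  by rewrite -{1}(proj1 pW) mxE.
by apply: mulr_ge0; [rewrite invr_ge0; exact: psd_diag_ge0 | exact: pP.2].
Qed.

Lemma psdB_mul_invmx m (X Z : 'M[R]_m) : X^T = X -> X \in unitmx -> psd Z ->
  (forall a, qform Z a <= qform X a) -> psd (Z - Z *m invmx X *m Z).
Proof.
move=> sX uX [sZ qZ] ZleX; set Y := invmx X.
have sY : Y^T = Y by rewrite /Y trmx_inv sX.
split; first by rewrite linearB /= !trmx_mul sY sZ mulmxA.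
move=> b; set y := Y *m (Z *m b).
have qXy : qform X y = qform Y (Z *m b).
  by rewrite /y -[qform X _]qform_mulmx sY mulVmx // mul1mx.
have bZ : bform b Z y = qform Y (Z *m b).
  by rewrite qformE /bform /y trmx_mul sZ !mulmxA.
have -> : qform (Z - Z *m Y *m Z) b = qform Z b - qform Y (Z *m b).
  by rewrite qformBm -[in Z *m Y](sZ) qform_mulmx.
have := qZ (b + (-1) *: y); rewrite qformDZ // bZ.
have := ZleX y; rewrite qXy; lra.
Qed.

End Semidefinite.

Section Blocks.
Variables (R : comNzRingType) (n : nat).
Implicit Types (A B W : 'M[R]_(4 * n)) (i j : 'I_n).

Definition bsel i : 'M[R]_(4, 4 * n) := \matrix_(a, p) (p == bidx i a)%:R.

Definition bdelta i j (G : 'M[R]_4) := (bsel i)^T *m G *m bsel j.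

Lemma bidx_inj i j (a b : 'I_4) : (bidx i a == bidx j b) = (i == j) && (a == b).
Proof.
apply/eqP/andP => [[e] | [/eqP -> /eqP ->] //].
by split; apply/eqP/ord_inj; move: e; have := ltn_ord a; have := ltn_ord b; lia.
Qed.

Lemma bidx_surj (p : 'I_(4 * n)) : exists i a, p = bidx i a.
Proof.
by exists (Ordinal (bdiv_proof p)), (Ordinal (bmod_proof p)); apply: ord_inj => /=; lia.
Qed.

Lemma sum_kronecker_mul m (k : 'I_m) (F : 'I_m -> R) : \sum_p (p == k)%:R * F p = F k.
Proof.
rewrite (bigD1 k) //= eqxx mul1r big1 ?addr0 // => p /negbTE ->.
by rewrite mul0r.
Qed.

Lemma bsel_mul_tr i j : bsel i *m (bsel j)^T = if i == j then 1%:M else 0.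
Proof.
apply/matrixP => a b; rewrite !mxE.
under eq_bigr do rewrite !mxE.
by rewrite sum_kronecker_mul bidx_inj; case: (i == j); rewrite !mxE.
Qed.

Lemma blkE A i j : blk A i j = bsel i *m A *m (bsel j)^T.
Proof.
apply/matrixP => a b; rewrite !mxE.
under eq_bigr do rewrite !mxE.
under eq_bigr do under eq_bigr do rewrite !mxE.
under eq_bigr do rewrite sum_kronecker_mul.
by under eq_bigr do rewrite mulrC; rewrite sum_kronecker_mul.
Qed.

Lemma sum_bsel : \sum_i (bsel i)^T *m bsel i = 1%:M.
Proof.
apply/matrixP => p q; have [i [a ->]] := bidx_surj p.
rewrite summxE; under eq_bigr do rewrite mxE; under eq_bigr do under eq_bigr do rewrite !mxE.
rewrite (bigD1 i) //= [X in _ + X]big1 ?addr0; last first.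
  move=> j; rewrite eq_sym => /negbTE ij.
  by apply: big1 => b _; rewrite bidx_inj ij mul0r.
rewrite (bigD1 a) //= [X in _ + X]big1 ?addr0; last first.
  by move=> b; rewrite eq_sym bidx_inj eqxx => /negbTE ->; rewrite mul0r.
by rewrite bidx_inj !eqxx mul1r mxE eq_sym.
Qed.

Lemma blk_decomp A : A = \sum_i \sum_j bdelta i j (blk A i j).
Proof.
rewrite -[A in LHS]mul1mx -[A in LHS]mulmx1 -sum_bsel mulmxA !mulmx_suml.
apply: eq_bigr => i _; rewrite mulmx_sumr; apply: eq_bigr => j _.
by rewrite /bdelta blkE !mulmxA.
Qed.

Lemma blkP A B : (forall i j, blk A i j = blk B i j) -> A = B.
Proof.
move=> eqAB; rewrite (blk_decomp A) (blk_decomp B).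
by under eq_bigr do under eq_bigr do rewrite eqAB.
Qed.

Lemma blk_bdelta i j (G : 'M[R]_4) i' j' :
  blk (bdelta i j G) i' j' = if (i' == i) && (j' == j) then G else 0.
Proof.
rewrite blkE /bdelta !mulmxA bsel_mul_tr -!mulmxA bsel_mul_tr (eq_sym j).
by case: (i' == i); case: (j' == j); rewrite ?mul1mx ?mulmx1 ?mul0mx ?mulmx0.
Qed.

Lemma blkD A B i j : blk (A + B) i j = blk A i j + blk B i j.
Proof. by rewrite !blkE mulmxDr mulmxDl. Qed.

Lemma blkZ a A i j : blk (a *: A) i j = a *: blk A i j.
Proof. by rewrite !blkE -scalemxAr -scalemxAl. Qed.

Lemma blkB A B i j : blk (A - B) i j = blk A i j - blk B i j.
Proof. by rewrite -scaleN1r blkD blkZ scaleN1r. Qed.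

Lemma blk0 i j : blk (0 : 'M[R]_(4 * n)) i j = 0.
Proof. by rewrite blkE mulmx0 mul0mx. Qed.

Lemma blk_sum I (r : seq I) (P : pred I) (F : I -> 'M[R]_(4 * n)) i j :
  blk (\sum_(k <- r | P k) F k) i j = \sum_(k <- r | P k) blk (F k) i j.
Proof. by elim/big_rec2: _ => [|k x y _ <-]; rewrite ?blk0 ?blkD. Qed.

Lemma blk_tr A i j : blk A^T i j = (blk A j i)^T.
Proof. by rewrite !blkE !trmx_mul trmxK mulmxA. Qed.

Lemma blk_mkblk (F : 'I_n -> 'I_n -> 'M[R]_4) i j : blk (mkblk F) i j = F i j.
Proof.
have bdiv (k : 'I_n) (c : 'I_4) : Ordinal (bdiv_proof (bidx k c)) = k.
  by apply: ord_inj => /=; have := ltn_ord c; lia.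
have bmod (k : 'I_n) (c : 'I_4) : Ordinal (bmod_proof (bidx k c)) = c.
  by apply: ord_inj => /=; have := ltn_ord c; lia.
by apply/matrixP => a b; rewrite !mxE !bdiv !bmod.
Qed.

Lemma mxdot_bdelta i j (G : 'M[R]_4) W : mxdot (bdelta i j G) W = mxdot G (blk W i j).
Proof.
by rewrite /mxdot /bdelta blkE !trmx_mul trmxK -!mulmxA mxtrace_mulC !mulmxA.
Qed.

Lemma mxdot_blk A W : mxdot A W = \sum_i \sum_j mxdot (blk A i j) (blk W i j).
Proof.
rewrite {1}(blk_decomp A) mxdot_suml; apply: eq_bigr => i _.
by rewrite mxdot_suml; apply: eq_bigr => j _; exact: mxdot_bdelta.
Qed.

Lemma mxtrace_blk W : \tr W = \sum_i \tr (blk W i i).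
Proof.
rewrite -[W in LHS]mulmx1 -sum_bsel mulmx_sumr raddf_sum /=.
by apply: eq_bigr => i _; rewrite mulmxA mxtrace_mulC blkE mulmxA.
Qed.

End Blocks.

Lemma first_order_ge0 (R : realFieldType) (a b : R) : 0 <= b ->
  (forall t, 0 < t -> t <= 1 -> 0 <= 2 * t * a + t ^+ 2 * b) -> 0 <= a.
Proof.
move=> b0 H; rewrite leNgt; apply/negP => a0.
have ba : 0 < b - a by lra.
pose t := - a / (b - a).
have tE : t * (b - a) = - a by rewrite /t mulfVK ?gt_eqF.
have t0 : 0 < t by rewrite /t divr_gt0 ?oppr_gt0.
have t1 : t <= 1 by rewrite /t ler_pdivrMr // mul1r; lra.
have := H t t0 t1; nra.
Qed.

Section Spectraplex.
Variables (R : realType) (m : nat).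
Local Open Scope classical_set_scope.

Definition spectraplex (W : 'M[R]_m) := psd W /\ \tr W = 1.

Lemma spectraplex_rank1 (v : 'cV[R]_m) : v != 0 ->
  spectraplex ((sqnorm v)^-1 *: (v *m v^T)).
Proof.
move=> nz; have v0 := sqnorm_gt0 nz.
split; first by apply: psdZ (psd_rank1 v); rewrite invr_ge0 ltW.
rewrite mxtraceZ (_ : \tr _ = sqnorm v) ?mulVf ?gt_eqF //.
by rewrite mxtrace_mulC -qform1 /qform mulmx1 /mxtrace big_ord1.
Qed.

Lemma spectraplex_entry (W : 'M[R]_m) p q : spectraplex W -> `|W p q| <= 1.
Proof.
move=> [pW tW]; have [sW qW] := pW.
have diag_le1 r : W r r <= 1.
  rewrite -tW /mxtrace (bigD1 r) //= lerDl.
  by apply: sumr_ge0 => i _; exact: psd_diag_ge0.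
have pos t : 0 <= W p p + 2 * t * W p q + t ^+ 2 * W q q.
  by have := qW (delta_mx p 0 + t *: delta_mx q 0); rewrite qformDZ // !qformE !bform_delta.
have := pos 1; have := pos (-1); have := diag_le1 p; have := diag_le1 q.
rewrite ler_norml; move=> *; apply/andP; split; nra.
Qed.

Lemma spectraplex_convex (W1 W2 : 'M[R]_m) t : spectraplex W1 -> spectraplex W2 ->
  0 <= t -> t <= 1 -> spectraplex (W1 + t *: (W2 - W1)).
Proof.
move=> [[s1 q1] t1] [[s2 q2] t2] t0 t1'; split; last first.
  by rewrite mxtraceD mxtraceZ raddfB /= t1 t2 subrr mulr0 addr0.
split; first by rewrite linearD /= linearZ /= linearB /= s1 s2.
by move=> v; rewrite qformDm qformZm qformBm; have := q1 v; have := q2 v; nra.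
Qed.

Lemma continuous_mxdot_vec (B : 'M[R]_m) :
  continuous (fun x : 'rV[R]_(m * m) => mxdot B (vec_mx x)).
Proof.
under eq_fun do rewrite mxdotE.
apply: (continuous_big add_continuous) => p _.
apply: (continuous_big add_continuous) => q _ x.
under eq_fun do rewrite mxE.
apply: continuousM; [exact: cst_continuous | exact: coord_continuous].
Qed.

Let vspectraplex := [set x : 'rV[R]_(m * m) | spectraplex (vec_mx x)].

Lemma vspectraplexE : vspectraplex =
  \bigcap_(pq in [set: 'I_m * 'I_m])
     [set x | mxdot (delta_mx pq.1 pq.2 - delta_mx pq.2 pq.1) (vec_mx x) = 0]
  `&` [set x | mxdot 1%:M (vec_mx x) = 1]
  `&` \bigcap_(v in [set: 'cV[R]_m]) [set x | 0 <= mxdot (v *m v^T) (vec_mx x)].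
Proof.
apply/seteqP; split=> x /=.
  move=> [[sW qW] tW]; split; [split|] => [[p q] _ /=||v _ /=].
  - by rewrite mxdotBl !mxdot_deltal -{1}sW mxE subrr.
  - by rewrite mxdot1l.
  - by rewrite mxdotC -qform_mxdot.
move=> [[sym tr] qW]; split; [split|]; last by rewrite -mxdot1l.
  apply/matrixP => p q; apply/eqP; rewrite mxE -subr_eq0.
  by have := sym (q, p) I; rewrite /= mxdotBl !mxdot_deltal => ->.
by move=> v; rewrite qform_mxdot mxdotC; exact: (qW v I).
Qed.

Lemma compact_vspectraplex : compact vspectraplex.
Proof.
have closed_pre (B : 'M[R]_m) (S : set R) :
    closed S -> closed [set x | S (mxdot B (vec_mx x))].
  by move=> cS; move: (@continuous_mxdot_vec B) => /continuous_closedP; apply.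
apply: bounded_closed_compact.
  apply: filterS (nbhs_pinfty_ge (r := 1) (num_real _)) => M M1 x Sx /=.
  apply: le_trans M1; rewrite (_ : `|x| = mx_norm x) // mx_normrE.
  apply: bigmax_le => // [[i j]] _ /=; case: (mxvec_indexP j) => p q.
  by rewrite (ord1 i) -{1}(vec_mxK x) mxvecE; exact: spectraplex_entry.
rewrite vspectraplexE; apply: closedI; first apply: closedI.
- by apply: closed_bigI => pq _; exact: closed_pre _ _ (closed_eq (y := _)).
- exact: closed_pre _ _ (closed_eq (y := _)).
- by apply: closed_bigI => v _; exact: closed_pre _ _ (closed_ge (y := 0)).
Qed.

Lemma spectraplex_min (f : 'M[R]_m -> R) : (0 < m)%N -> continuous (f \o vec_mx) ->
  exists2 W, spectraplex W & forall W', spectraplex W' -> f W <= f W'.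
Proof.
move=> m0 cf; pose e : 'cV[R]_m := delta_mx (Ordinal m0) 0.
have e0 : e != 0.
  by apply/negP => /eqP/matrixP/(_ (Ordinal m0) 0); rewrite !mxE !eqxx => /eqP; rewrite oner_eq0.
have nonempty : vspectraplex !=set0.
  exists (mxvec ((sqnorm e)^-1 *: (e *m e^T))).
  by rewrite /vspectraplex /= mxvecK; exact: spectraplex_rank1.
have [x Sx xmin] := compact_EVT_min nonempty compact_vspectraplex (continuous_subspaceT cf).
exists (vec_mx x); first by rewrite inE in Sx.
move=> W' SW'; have := xmin (mxvec W'); rewrite /= mxvecK inE; apply.
by rewrite /vspectraplex /= mxvecK.
Qed.

Lemma spectraplex_alternative (I : finType) (L : I -> 'M[R]_m) : (0 < m)%N ->
  (forall W, spectraplex W -> exists r, mxdot (L r) W != 0) ->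
  exists c : I -> R, forall W, spectraplex W -> 0 < mxdot (\sum_r c r *: L r) W.
Proof.
move=> m0 L_nondeg.
pose g W := \sum_r mxdot (L r) W ^+ 2.
have cg : continuous (g \o vec_mx).
  apply: (continuous_big add_continuous) => r _ x.
  under eq_fun do rewrite expr2.
  by apply: (@continuousM _ _ (fun x => mxdot (L r) (vec_mx x))); exact: continuous_mxdot_vec.
have [W0 SW0 W0min] := spectraplex_min m0 cg.
pose c r := mxdot (L r) W0; exists c => W SW.
have -> : mxdot (\sum_r c r *: L r) W = \sum_r c r * mxdot (L r) W.
  by rewrite mxdot_suml; apply: eq_bigr => r _; rewrite mxdotZl.
pose d r := mxdot (L r) W - c r.
have g0_gt0 : 0 < \sum_r c r ^+ 2.
  have [r0 nz] := L_nondeg _ SW0.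
  rewrite (bigD1 r0) //= ltr_pwDl ?sumr_ge0 // => [|r _]; last exact: sqr_ge0.
  by rewrite lt_def sqrf_eq0 nz sqr_ge0.
(* W0 minimizes g, so g does not decrease at first order along [W0, W]. *)
have cd_ge0 : 0 <= \sum_r c r * d r.
  apply: (@first_order_ge0 _ _ (\sum_r d r ^+ 2)).
    by apply: sumr_ge0 => r _; exact: sqr_ge0.
  move=> t t0 t1; have := W0min _ (spectraplex_convex SW0 SW (ltW t0) t1).
  have -> : g (W0 + t *: (W - W0)) =
      \sum_r (c r ^+ 2 + (2 * t * (c r * d r) + t ^+ 2 * d r ^+ 2)).
    by apply: eq_bigr => r _; rewrite mxdotDr mxdotZr mxdotBr /d /c; ring.
  by rewrite big_split /= lerDl big_split /= -!mulr_sumr.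
apply: (lt_le_trans g0_gt0).
have -> : \sum_r c r * mxdot (L r) W = \sum_r c r ^+ 2 + \sum_r c r * d r.
  by rewrite -big_split /=; apply: eq_bigr => r _; rewrite /d; ring.
by rewrite lerDl.
Qed.

Lemma psd_of_spectraplex_pos (A : 'M[R]_m) : A^T = A ->
  (forall W, spectraplex W -> 0 < mxdot A W) -> psd A.
Proof.
move=> sA Apos; split=> // v; have [->|nz] := eqVneq v 0; first by rewrite qform0.
have := Apos _ (spectraplex_rank1 nz).
by rewrite mxdotZr -qform_mxdot pmulr_rgt0 ?invr_gt0 ?sqnorm_gt0 // => /ltW.
Qed.

End Spectraplex.

Section ArrowRelaxation.
Variables (R : realType) (l : nat).

Local Notation N := (4 * l.+1)%N.
Local Notation i0 := (ord0 : 'I_l.+1).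
Local Notation lift0 k := (lift ord0 k : 'I_l.+1).

Lemma lift0_neq0 k : (lift0 k == i0) = false.
Proof. by apply/negbTE; rewrite eq_sym neq_lift. Qed.

Lemma qform_blk (W : 'M[R]_N) i a : qform (blk W i i) a = qform W ((bsel R i)^T *m a).
Proof. by rewrite blkE -qform_mulmx trmxK. Qed.

Lemma psd_blk (W : 'M[R]_N) i : psd W -> psd (blk W i i).
Proof. by move=> pW; rewrite blkE -{1}[bsel R i]trmxK; exact: psd_mulmx. Qed.

Section Completion.
Variables (X : 'M[R]_4) (Z : 'I_l -> 'M[R]_4).
Hypotheses (X_sym : X^T = X) (X_unit : X \in unitmx) (Z_sym : forall k, (Z k)^T = Z k).

Let Y := invmx X.
Let colblk (i : 'I_l.+1) := if unlift i0 i is Some k then Z k else X.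
Let schur (i : 'I_l.+1) := if unlift i0 i is Some k then Z k - Z k *m Y *m Z k else 0.
Let C := \sum_i colblk i *m bsel R i.

(* C^T X^-1 C has blocks Z_i X^-1 Z_j (with Z_0 := X); adding the Schur
   complements Z_k - Z_k X^-1 Z_k on the diagonal gives blocks [X Z_k; Z_k Z_k]. *)
Definition completion : 'M[R]_N := C^T *m Y *m C + \sum_i bdelta i i (schur i).

Lemma blk_completion i j :
  blk completion i j = (colblk i)^T *m Y *m colblk j + (if i == j then schur i else 0).
Proof.
have C_bsel j' : C *m (bsel R j')^T = colblk j'.
  rewrite /C mulmx_suml (bigD1 j') //= -mulmxA bsel_mul_tr eqxx mulmx1 big1 ?addr0 //.
  by move=> i' /negbTE ij; rewrite -mulmxA bsel_mul_tr ij mulmx0.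
rewrite /completion blkD blk_sum blkE -!C_bsel trmx_mul trmxK !mulmxA; congr (_ + _).
rewrite (bigD1 i) //= blk_bdelta eqxx big1 ?addr0 => [|i' i'i]; last first.
  by rewrite blk_bdelta [i == i']eq_sym (negbTE i'i).
by rewrite eq_sym; case: (j == i) => //; case: eqP => // ->.
Qed.

Lemma completion_blk00 : blk completion i0 i0 = X.
Proof.
by rewrite blk_completion /colblk /schur unlift_none eqxx addr0 X_sym mulmxV // mul1mx.
Qed.

Lemma completion_blk0k k : blk completion i0 (lift0 k) = Z k.
Proof.
rewrite blk_completion /colblk unlift_none liftK eq_sym lift0_neq0 addr0.
by rewrite X_sym mulmxV // mul1mx.
Qed.

Lemma completion_blkk0 k : blk completion (lift0 k) i0 = Z k.
Proof.
rewrite blk_completion /colblk unlift_none liftK lift0_neq0 addr0.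
by rewrite Z_sym -mulmxA mulVmx // mulmx1.
Qed.

Lemma completion_blkkk k : blk completion (lift0 k) (lift0 k) = Z k.
Proof. by rewrite blk_completion /colblk /schur liftK eqxx Z_sym addrC subrK. Qed.

Lemma psd_completion : psd X -> (forall k, psd (Z k)) ->
  (forall k a, qform (Z k) a <= qform X a) -> psd completion.
Proof.
move=> pX pZ ZleX; apply: psdD; first exact/psd_mulmx/psd_invmx.
apply: psd_sum => i _; apply: psd_mulmx; rewrite /schur.
by case: (unlift i0 i) => [k|]; [exact: psdB_mul_invmx | exact: psd0].
Qed.

End Completion.

Lemma admissible_dual0 : admissible_dual (0 : 'M[R]_N).
Proof.
by rewrite /admissible_dual trmx0; split=> //; split=> *; rewrite !blk0 ?scaler0 ?addr0.
Qed.

Lemma admissible_dualD (A B : 'M[R]_N) :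
  admissible_dual A -> admissible_dual B -> admissible_dual (A + B).
Proof.
move=> [sA [hA zA]] [sB [hB zB]]; split; first by rewrite linearD /= sA sB.
split=> [k|i j h]; rewrite !blkD; last by rewrite zA // zB // addr0.
by rewrite scalerDr addrACA hA hB addr0.
Qed.

Lemma admissible_dualZ a (A : 'M[R]_N) : admissible_dual A -> admissible_dual (a *: A).
Proof.
move=> [sA [hA zA]]; split; first by rewrite linearZ /= sA.
split=> [k|i j h]; rewrite !blkZ; last by rewrite zA // scaler0.
by rewrite scalerA mulrC -scalerA -scalerDr hA scaler0.
Qed.

Lemma admissible_dual_sum I (r : seq I) (P : pred I) (F : I -> 'M[R]_N) :
  (forall i, P i -> admissible_dual (F i)) -> admissible_dual (\sum_(i <- r | P i) F i).
Proof.
move=> h; elim/big_rec: _ => [|i x Pi ax]; first exact: admissible_dual0.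
by apply: admissible_dualD => //; exact: h.
Qed.

(* As k and the symmetric E vary, these span the admissible duals. *)
Definition dual_gen k (E : 'M[R]_4) : 'M[R]_N :=
  bdelta (lift0 k) (lift0 k) (2%:R *: E) - bdelta i0 (lift0 k) E - bdelta (lift0 k) i0 E.

Lemma blk_dual_gen k E i j : blk (dual_gen k E) i j =
  (if (i == lift0 k) && (j == lift0 k) then 2%:R *: E else 0)
  - (if (i == i0) && (j == lift0 k) then E else 0)
  - (if (i == lift0 k) && (j == i0) then E else 0).
Proof. by rewrite !blkB !blk_bdelta. Qed.

Lemma admissible_dual_gen k E : E^T = E -> admissible_dual (dual_gen k E).
Proof.
move=> sE; split.
  by rewrite /dual_gen /bdelta !linearB /= !trmx_mul !trmxK linearZ /= sE !mulmxA addrAC.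
split=> [k'|i j h]; rewrite !blk_dual_gen.
  rewrite eqxx lift0_neq0 andbF (inj_eq lift_inj) /= !subr0.
  by rewrite andbb; case: (k' == k); rewrite sub0r ?oppr0 ?scalerN ?addrN ?scaler0 ?addr0.
have [ik|ik] := eqVneq i (lift0 k); have [jk|jk] := eqVneq j (lift0 k);
  have [i0' |i0'] := eqVneq i i0; have [j0|j0] := eqVneq j i0;
  rewrite /= ?subr0 //; exfalso; apply: h; subst; rewrite ?eqxx ?lift0_neq0 ?orbT //.
Qed.

Lemma mxdot_dual_gen k E (W : 'M[R]_N) : mxdot (dual_gen k E) W =
  mxdot E (2%:R *: blk W (lift0 k) (lift0 k) - blk W i0 (lift0 k) - blk W (lift0 k) i0).
Proof. by rewrite /dual_gen !mxdotBl !mxdot_bdelta !mxdotBr mxdotZl mxdotZr. Qed.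

Lemma mxdot_admissible_dual (D W : 'M[R]_N) : admissible_dual D -> W^T = W ->
  (forall k, blk W i0 (lift0 k) = blk W (lift0 k) (lift0 k)) -> mxdot D W = 0.
Proof.
move=> [sD [hD zD]] sW hW.
have D00 : blk D i0 i0 = 0 by apply: zD; rewrite eqxx.
have Djk j k : j != k -> blk D (lift0 j) (lift0 k) = 0.
  by move=> jk; apply: zD; rewrite (inj_eq lift_inj) (negbTE jk) !lift0_neq0.
have blk_k0 (A : 'M[R]_N) k : A^T = A -> blk A (lift0 k) i0 = (blk A i0 (lift0 k))^T.
  by move=> sA; rewrite -blk_tr sA.
rewrite mxdot_blk big_ord_recl big_ord_recl D00 mxdot0l add0r -big_split big1 // => k _.
rewrite big_ord_recl (bigD1 k) //= big1 ?addr0; last by move=> j jk; rewrite Djk ?mxdot0l // eq_sym.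
rewrite !blk_k0 // mxdot_tr addrA -hW -!mxdotDl -mulr2n -scaler_nat addrC.
by rewrite hW hD mxdot0l.
Qed.

Definition sym_constraint (W : 'M[R]_N) :=
  forall k, 2%:R *: blk W (lift0 k) (lift0 k) = blk W i0 (lift0 k) + blk W (lift0 k) i0.

Lemma sym_constraint_of_orth (W : 'M[R]_N) : W^T = W ->
  (forall k a b, mxdot (dual_gen k (delta_mx a b + delta_mx b a)) W = 0) -> sym_constraint W.
Proof.
move=> sW orth k; apply/eqP; rewrite -subr_eq0 opprD addrA; apply/eqP.
set P := _ - _ - _.
have sP : P^T = P by rewrite /P !linearB /= linearZ /= -!blk_tr sW addrAC.
have orthP a b : mxdot (delta_mx a b + delta_mx b a) P = 0 by rewrite -mxdot_dual_gen orth.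
clearbody P.
apply/matrixP => a b; have Pba : P b a = P a b by rewrite -{1}sP mxE.
by have := orthP a b; rewrite mxdotDl !mxdot_deltal Pba mxE; lra.
Qed.

Definition corner : 'M[R]_N := bdelta i0 i0 (delta_mx 0 0).

Lemma blk_corner_k0 k j : blk corner (lift0 k) j = 0.
Proof. by rewrite blk_bdelta lift0_neq0. Qed.

Lemma blk_corner_0k k : blk corner i0 (lift0 k) = 0.
Proof. by rewrite blk_bdelta lift0_neq0 andbF. Qed.

Lemma psd_corner : psd corner.
Proof.
rewrite /corner /bdelta.
have -> : (delta_mx 0 0 : 'M[R]_4) = delta_mx 0 0 *m (delta_mx 0 0 : 'cV[R]_4)^T.
  by rewrite trmx_delta mul_delta_mx.
exact/psd_mulmx/psd_rank1.
Qed.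

Lemma SDR_feasible_corner : SDR_feasible corner.
Proof.
split; first exact: psd_corner.
by split=> [k|]; rewrite ?blk_corner_0k ?blk_corner_k0 // blk_bdelta eqxx mxtrace_delta.
Qed.

Lemma spectraplex_corner : spectraplex corner.
Proof.
split; first exact: psd_corner.
rewrite mxtrace_blk big_ord_recl big1 => [|k _]; last by rewrite blk_corner_k0 mxtrace0.
by rewrite blk_bdelta eqxx addr0 mxtrace_delta.
Qed.

Lemma sym_constraint_corner : sym_constraint corner.
Proof. by move=> k; rewrite !blk_corner_k0 blk_corner_0k scaler0 addr0. Qed.

Section Objective.
Variables (Q : 'I_l -> 'M[R]_4) (c2 : 'I_l -> R).

Definition Qblock k := 2^-1 *: (Q k - (c2 k)%:M).

Lemma mxdot_Qcal (W : 'M[R]_N) :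
  mxdot (Qcal Q c2) W = \sum_k mxdot (Qblock k) (blk W i0 (lift0 k) + blk W (lift0 k) i0).
Proof.
have Q00 : blk (Qcal Q c2) i0 i0 = 0 by rewrite blk_mkblk unlift_none.
have Q0k k : blk (Qcal Q c2) i0 (lift0 k) = Qblock k by rewrite blk_mkblk unlift_none liftK.
have Qk0 k : blk (Qcal Q c2) (lift0 k) i0 = Qblock k by rewrite blk_mkblk unlift_none liftK.
have Qkj k j : blk (Qcal Q c2) (lift0 k) (lift0 j) = 0 by rewrite blk_mkblk !liftK.
rewrite mxdot_blk big_ord_recl big_ord_recl Q00 mxdot0l add0r -big_split.
apply: eq_bigr => k _; rewrite big_ord_recl big1 => [|j _]; last by rewrite Qkj mxdot0l.
by rewrite Q0k Qk0 addr0 mxdotDr.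
Qed.

Lemma mxdot_Bcal (W : 'M[R]_N) : mxdot (Bcal R l) W = \tr (blk W i0 i0).
Proof.
have B00 : blk (Bcal R l) i0 i0 = 1%:M by rewrite blk_mkblk.
have B0k k : blk (Bcal R l) i0 (lift0 k) = 0 by rewrite blk_mkblk lift0_neq0 andbF.
have Bkj k j : blk (Bcal R l) (lift0 k) j = 0 by rewrite blk_mkblk lift0_neq0.
rewrite mxdot_blk big_ord_recl big_ord_recl B00 mxdot1l.
under eq_bigr do rewrite B0k mxdot0l.
rewrite big1_eq addr0; under eq_bigr do under eq_bigr do rewrite Bkj mxdot0l.
by rewrite big1 ?addr0 // => k _; rewrite big1_eq.
Qed.

Lemma weak_duality (W D : 'M[R]_N) mu : SDR_feasible W -> D_feasible Q c2 mu D ->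
  mu <= \tr (Qcal Q c2 *m W).
Proof.
move=> [pW [hW tW]] [aD pM]; have sW := proj1 pW.
have := mxdot_psd_ge0 pM pW.
rewrite !mxdotBl mxdotZl mxdot_Bcal tW mulr1 (mxdot_admissible_dual aD sW hW) subr0.
by rewrite subr_ge0 /mxdot sW.
Qed.

Section LowerBound.
Variable W : 'M[R]_N.
Hypotheses (W_psd : psd W) (W_sym_constraint : sym_constraint W).

Local Notation X := (blk W i0 i0).
Local Notation Zk k := (blk W (lift0 k) (lift0 k)).

Lemma qform_blk_le k a : qform (Zk k) a <= qform X a.
Proof.
have sW := proj1 W_psd.
have off : bform a (blk W i0 (lift0 k)) a = qform (Zk k) a.
  have := congr1 (bform a ^~ a) (W_sym_constraint k).
  have -> : blk W (lift0 k) i0 = (blk W i0 (lift0 k))^T by rewrite -blk_tr sW.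
  rewrite /= bformZm bformDm bform_trm -qformE; lra.
have := W_psd.2 ((bsel R i0)^T *m a + (-1) *: ((bsel R (lift0 k))^T *m a)).
rewrite qformDZ // -!qform_blk bform_mulmx trmxK -blkE off; lra.
Qed.

Lemma mxtrace_blk_le k : \tr (Zk k) <= \tr X.
Proof.
apply: ler_sum => a _.
by have := qform_blk_le k (delta_mx a 0); rewrite !qformE !bform_delta.
Qed.

Variable mu' : R.
Hypothesis mu'_lb : forall W', SDR_feasible W' -> mu' <= \tr (Qcal Q c2 *m W').

(* Perturbing X to X + e makes it invertible, so that the completion is defined. *)
Lemma perturbed_lower_bound e : 0 < e -> mu' * \tr (X + e%:M) <= mxdot (Qcal Q c2) W.
Proof.
move=> e0; set Xe := X + e%:M.
have sX : X^T = X by rewrite -blk_tr (proj1 W_psd).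
have sXe : Xe^T = Xe by rewrite linearD /= sX tr_scalar_mx.
have qXe a : qform Xe a = qform X a + e * sqnorm a by rewrite qformDm -scalemx1 qformZm qform1.
have uXe : Xe \in unitmx.
  apply: posdef_unitmx => v /sqnorm_gt0 v0; rewrite qXe.
  by apply: ltr_wpDl; [exact: (psd_blk i0 W_psd).2 | exact: mulr_gt0].
have ZleXe k a : qform (Zk k) a <= qform Xe a.
  by have := qform_blk_le k a; have := sqnorm_ge0 a; rewrite qXe; nra.
have pXe : psd Xe.
  by split=> // a; have := (psd_blk i0 W_psd).2 a; have := sqnorm_ge0 a; rewrite qXe; nra.
set W' := completion Xe (fun k => Zk k).
have sZ k : (Zk k)^T = Zk k by rewrite -blk_tr (proj1 W_psd).
have pW' : psd W' by apply: psd_completion => // k; exact: psd_blk.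
have trXe : 0 < \tr Xe.
  rewrite mxtraceD mxtrace_scalar; apply: ltr_wpDl; last by rewrite pmulrn_lgt0.
  by apply: sumr_ge0 => a _; apply: psd_diag_ge0; exact: psd_blk.
have feas : SDR_feasible ((\tr Xe)^-1 *: W').
  split; first by apply: psdZ; rewrite ?invr_ge0 ?ltW.
  split=> [k|]; rewrite !blkZ ?completion_blk0k ?completion_blkkk ?completion_blk00 //.
  by rewrite mxtraceZ mulVf ?gt_eqF.
have same_obj : mxdot (Qcal Q c2) W' = mxdot (Qcal Q c2) W.
  rewrite !mxdot_Qcal; apply: eq_bigr => k _.
  by rewrite completion_blk0k ?completion_blkk0 // -W_sym_constraint -mulr2n -scaler_nat.
have := mu'_lb feas.
rewrite (_ : \tr _ = mxdot (Qcal Q c2) ((\tr Xe)^-1 *: W')); last first.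
  by rewrite /mxdot [(_ *: W')^T]linearZ /= (proj1 pW').
by rewrite mxdotZr same_obj -ler_pdivlMr // mulrC.
Qed.

Lemma relaxed_lower_bound : mu' * \tr X <= mxdot (Qcal Q c2) W.
Proof.
apply/ler_addgt0Pr => d d0; set t := \tr X.
pose e := d / (4 * (`|mu'| + 1)).
have e0 : 0 < e by rewrite divr_gt0 // mulr_gt0 // ltr_wpDl.
have de : 4 * e * (`|mu'| + 1) = d by rewrite /e; field; rewrite gt_eqF // ltr_wpDl.
have := perturbed_lower_bound e0.
rewrite mxtraceD mxtrace_scalar -mulr_natr.
have := lerNnormlW (lexx `|mu'|); nra.
Qed.

End LowerBound.

Hypothesis Q_sym : forall k, (Q k)^T = Q k.

Lemma Qcal_sym : (Qcal Q c2)^T = Qcal Q c2.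
Proof.
apply: blkP => i j; rewrite blk_tr !blk_mkblk.
case: (unlift i0 i) => [a|]; case: (unlift i0 j) => [b|] //=; rewrite ?trmx0 //.
all: by rewrite /Qblock linearZ /= linearB /= Q_sym tr_scalar_mx.
Qed.

Lemma Bcal_sym : (Bcal R l)^T = Bcal R l.
Proof.
apply: blkP => i j; rewrite blk_tr !blk_mkblk andbC.
by case: (_ && _); rewrite ?trmx0 ?tr_scalar_mx.
Qed.

Section DualAttainment.
Variables (mu' mu : R).
Hypothesis mu'_lb : forall W, SDR_feasible W -> mu' <= \tr (Qcal Q c2 *m W).
Hypothesis mu_lt : mu < mu'.

Local Notation slack := (Qcal Q c2 - mu *: Bcal R l).

Lemma mxdot_slack_gt0 W : spectraplex W -> sym_constraint W -> 0 < mxdot slack W.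
Proof.
move=> [pW tW] hW; rewrite mxdotBl mxdotZl mxdot_Bcal.
have lb := relaxed_lower_bound pW hW mu'_lb.
set t := \tr (blk W i0 i0) in lb *.
have t_gt0 : 0 < t.
  have trZ : \sum_(k < l) \tr (blk W (lift0 k) (lift0 k)) <= t * l%:R.
    rewrite mulr_natr -[l in t *+ l]card_ord -sumr_const; apply: ler_sum => k _.
    exact: mxtrace_blk_le.
  have : t + \sum_(k < l) \tr (blk W (lift0 k) (lift0 k)) = 1.
    by rewrite -tW mxtrace_blk big_ord_recl.
  have : 0 <= (l%:R : R) by [].
  nra.
have : 0 < (mu' - mu) * t by rewrite mulr_gt0 ?subr_gt0.
nra.
Qed.

Lemma dual_feasible_below : exists D, D_feasible Q c2 mu D.
Proof.
pose E (a b : 'I_4) : 'M[R]_4 := delta_mx a b + delta_mx b a.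
have E_sym a b : (E a b)^T = E a b by rewrite /E linearD /= !trmx_delta addrC.
pose L (r : option ('I_l * 'I_4 * 'I_4)) :=
  if r is Some (k, a, b) then dual_gen k (E a b) else slack.
have L_nondeg W : spectraplex W -> exists r, mxdot (L r) W != 0.
  move=> SW; case: (pickP (fun r => mxdot (L r) W != 0)) => [r nz|L_orth]; first by exists r.
  have W_orth r : mxdot (L r) W = 0 by apply/eqP/negbFE; rewrite L_orth.
  have hW : sym_constraint W.
    by apply: sym_constraint_of_orth (proj1 SW.1) _ => k a b; exact: W_orth (Some (k, a, b)).
  by have := mxdot_slack_gt0 SW hW; rewrite (W_orth None) ltxx.
have [c c_pos] := spectraplex_alternative (muln_gt0 4 l.+1) L_nondeg.
set Lam := \sum_r c r *: L r in c_pos.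
pose s := c None; pose Dr := \sum_(r | r != None) c r *: L r.
have LamE : Lam = s *: slack + Dr by rewrite /Lam (bigD1 None).
have Dr_adm : admissible_dual Dr.
  apply: admissible_dual_sum => -[[[k a] b] _|//]; apply: admissible_dualZ.
  exact: admissible_dual_gen.
have s_gt0 : 0 < s.
  have := c_pos _ spectraplex_corner; rewrite LamE mxdotDl mxdotZl.
  rewrite (mxdot_admissible_dual Dr_adm psd_corner.1 SDR_feasible_corner.2.1).
  have := mxdot_slack_gt0 spectraplex_corner sym_constraint_corner.
  by move=> /pmulr_lgt0 pos; rewrite addr0 pos.
exists (- s^-1 *: Dr); split; first exact: admissible_dualZ.
have -> : slack - - s^-1 *: Dr = s^-1 *: Lam.
  by rewrite LamE scalerDr scalerA mulVf ?gt_eqF // scale1r scaleNr opprK.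
apply: psdZ; first by rewrite invr_ge0 ltW.
apply: psd_of_spectraplex_pos c_pos.
rewrite /Lam linear_sum; apply: eq_bigr => -[[[k a] b]|] _; rewrite linearZ /=.
  by case: (admissible_dual_gen k (E_sym a b)) => ->.
by rewrite linearB linearZ /= Qcal_sym // Bcal_sym.
Qed.

End DualAttainment.

End Objective.

End ArrowRelaxation.

Unset Implicit Arguments.

Theorem proposition2p4 (R : realType) (l : nat)
  (y x : 'I_l -> 'cV[R]_3) (c2 : 'I_l -> R) (Q : 'I_l -> 'M[R]_4) :
  (forall k, 0 <= c2 k) ->
  (forall k, (Q k)^T = Q k) ->
  (forall k (w : 'cV[R]_4), sqnorm w = 1 ->
     qform (Q k) w = sqnorm (y k - rotq w *m x k)) ->
  SDR_value Q c2 = D_value Q c2.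
Proof.
move=> _ Q_sym _; apply/eqP; rewrite eq_le; apply/andP; split; last first.
  apply: ge_ereal_sup => _ [mu [D fD] <-]; apply/ereal_infP => _ [W fW <-].
  by rewrite lee_fin lerD2r (weak_duality fW fD).
have SDR_le W : SDR_feasible W -> (SDR_value Q c2 <= (SDR_obj Q c2 W)%:E)%E.
  by move=> fW; apply: ereal_inf_lbound; exists W.
case E : (SDR_value Q c2) => [p| |]; last by rewrite leNye.
  apply/lee_subgt0Pr => e e0; set sc := \sum_k c2 k.
  have mu'_lb W : SDR_feasible W -> p - sc <= \tr (Qcal Q c2 *m W).
    by move=> fW; have := SDR_le W fW; rewrite E lee_fin /SDR_obj -/sc lerBlDr.
  have mu_lt : p - e - sc < p - sc by lra.
  have [D fD] := dual_feasible_below Q_sym mu'_lb mu_lt.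
  apply: ereal_sup_ubound; exists (p - e - sc); first by exists D.
  by rewrite /D_obj -/sc subrK.
by have := SDR_le _ (SDR_feasible_corner R l); rewrite E.
Qed.
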